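(* Let $\mathfrak{g} = \mathfrak{r}_3$, the three-dimensional Lie algebra with basis $\{e_1,e_2,e_3\}$ and nonzero brackets $[e_1,e_2]=e_2+e_3$, $[e_1,e_3]=e_3$. For every inner product $\langle\cdot,\cdot\rangle$ on $\mathfrak{g}$, there exist $\lambda > 0$, $k > 0$, and an orthonormal basis $\{x_1, x_2, x_3\}$ with respect to $k \langle\cdot,\cdot\rangle$ such that the bracket relations are given by \[ [x_1,x_2] = x_2 + \lambda x_3, \quad [x_1,x_3] = x_3 \] (and $[x_2,x_3]=0$). Furthermore, the matrix expression of the derivation algebra $\mathrm{Der}(\mathfrak{g})$ with respect to $\{x_1, x_2, x_3\}$ coincides with \[ \left\{ \begin{pmatrix} 0 & 0 & 0 \\ x_{21} & x_{22} & 0 \\ x_{31} & x_{32} & x_{22} \end{pmatrix} \;\middle|\; x_{21}, x_{22}, x_{31}, x_{32} \in \mathbb{R} \right\}. \] *)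

(* The Lie algebra r_3 is modelled as column vectors 'cV[R]_3
   of coordinates with respect to the basis {e1,e2,e3}; R is any realType. *)
From HB Require Import structures.
From mathcomp Require Import all_boot all_order all_algebra.
From mathcomp Require Import reals.
Set Implicit Arguments. Unset Strict Implicit. Unset Printing Implicit Defensive.
Import Order.TTheory GRing.Theory Num.Theory.
Local Open Scope ring_scope.

Section R3.
Variable R : realType.
Local Notation g := 'cV[R]_3.

(* Lie bracket of r_3, extended bilinearly from
   [e1,e2] = e2 + e3, [e1,e3] = e3, [e2,e3] = 0:
   [u,v] = (u1 v2 - u2 v1)(e2 + e3) + (u1 v3 - u3 v1) e3. *)
Definition r3_bracket (u v : g) : g :=
  let a := u 0 0 * v 1 0 - u 1 0 * v 0 0 in
  let b := u 0 0 * v 2 0 - u 2 0 * v 0 0 in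
  \col_(i < 3) (if i == 0 :> nat then 0 else if i == 1 :> nat then a else a + b).

Definition is_inner_product (ip : g -> g -> R) : Prop :=
  (forall (a : R) (u v w : g), ip (a *: u + v) w = a * ip u w + ip v w) /\
  (forall u v : g, ip u v = ip v u) /\
  (forall v : g, v != 0 -> 0 < ip v v).

Definition is_derivation (D : g -> g) : Prop :=
  (forall (a : R) (u v : g), D (a *: u + v) = a *: D u + D v) /\
  (forall u v : g, D (r3_bracket u v) = r3_bracket (D u) v + r3_bracket u (D v)).

Definition matrix_wrt (x : 'I_3 -> g) (D : g -> g) (M : 'M[R]_3) : Prop :=
  forall j : 'I_3, D (x j) = \sum_(i < 3) M i j *: x i.

Definition der_form (x21 x22 x31 x32 : R) : 'M[R]_3 :=
  \matrix_(i < 3, j < 3)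
    nth 0 (nth [::] [:: [:: 0; 0; 0]; [:: x21; x22; 0]; [:: x31; x32; x22]] i) j.

End R3.

From HB Require Import structures.
From mathcomp Require Import all_boot all_order all_algebra.
From mathcomp Require Import reals.
From mathcomp Require Import ring lra.
Import Order.TTheory GRing.Theory Num.Theory.
Local Open Scope ring_scope.
Set Implicit Arguments. Unset Strict Implicit.

(* Gram-Schmidt applied to e3, e2, e1, in this order, gives an orthogonal
   basis y1 = e1 + ..., y2 = e2 + c e3, y3 = e3, triangular with respect to
   {e1, e2, e3}.  As [u, v] = (u1 v2 - u2 v1)(e2 + e3) + (u1 v3 - u3 v1) e3,
   any triangular triple p = e1 + ..., q = d e2 + ..., r = g e3 satisfies
   [p, q] = q + (d/g) r, [p, r] = r and [q, r] = 0.  Normalising y1 would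
   rescale the brackets [y1, _], so y2 and y3 are instead stretched to the
   length of y1, and k is the inverse square of that common length.
   In the coordinates of this basis, the Leibniz rule on the three basis
   brackets is a linear system in the entries of the matrix of a derivation,
   whose solutions are exactly the matrices [der_form _ _ _ _] since the
   structure constant lambda is nonzero. *)

Lemma ord3P (i : 'I_3) : i = 0 \/ i = 1 \/ i = 2.
Proof.
by case: i => [[|[|[|n]]] i_lt3] //;
  [left | right; left | right; right]; apply: val_inj.
Qed.

Section Bracket.
Variable R : realType.
Implicit Types (a : R) (u v w : 'cV[R]_3).
Local Notation br := (@r3_bracket R).

Lemma r3_bracketZl a u v : br (a *: u) v = a *: br u v.
Proof.
by apply/matrixP => i j; rewrite !mxE; case: ifP => _; [|case: ifP => _]; ring.
Qed.

Lemma r3_bracketDl u v w : br (u + v) w = br u w + br v w.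
Proof.
by apply/matrixP => i j; rewrite !mxE; case: ifP => _; [|case: ifP => _]; ring.
Qed.

Lemma r3_bracket_anti u v : br u v = - br v u.
Proof.
by apply/matrixP => i j; rewrite !mxE; case: ifP => _; [|case: ifP => _]; ring.
Qed.

Lemma r3_bracket_self u : br u u = 0.
Proof.
by apply/matrixP => i j; rewrite !mxE; case: ifP => _; [|case: ifP => _]; ring.
Qed.

Lemma r3_bracketZr a u v : br u (a *: v) = a *: br u v.
Proof. by rewrite r3_bracket_anti r3_bracketZl -scalerN -r3_bracket_anti. Qed.

Lemma r3_bracketDr u v w : br u (v + w) = br u v + br u w.
Proof. by rewrite r3_bracket_anti r3_bracketDl opprD -!r3_bracket_anti. Qed.

Lemma triangular_bracket (p q r : 'cV[R]_3) :
  p 0 0 = 1 -> q 0 0 = 0 -> r 0 0 = 0 -> r 1 0 = 0 -> r 2 0 != 0 ->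
  [/\ br p q = q + (q 1 0 / r 2 0) *: r, br p r = r & br q r = 0].
Proof.
move=> p0 q0 r0 r1 r2; split; apply/matrixP => i j; rewrite (ord1 j) !mxE;
  by case: (ord3P i) => [|[|]] ->; rewrite ?p0 ?q0 ?r0 ?r1; field.
Qed.

Lemma triangular_span (p q r : 'cV[R]_3) :
  p 0 0 = 1 -> q 0 0 = 0 -> q 1 0 != 0 -> r 0 0 = 0 -> r 1 0 = 0 -> r 2 0 != 0 ->
  forall v, exists d0 d1 d2 : R, v = d0 *: p + d1 *: q + d2 *: r.
Proof.
move=> p0 q0 q1 r0 r1 r2 v.
exists (v 0 0), ((v 1 0 - v 0 0 * p 1 0) / q 1 0),
  ((v 2 0 - v 0 0 * p 2 0 - (v 1 0 - v 0 0 * p 1 0) / q 1 0 * q 2 0) / r 2 0).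
apply/matrixP => i j; rewrite (ord1 j) !mxE.
case: (ord3P i) => [|[|]] ->; rewrite ?p0 ?q0 ?r0 ?r1.
all: field; by rewrite ?q1 ?r2.
Qed.

End Bracket.

Section InnerProduct.
Variables (R : realType) (ip : 'cV[R]_3 -> 'cV[R]_3 -> R).
Hypothesis ip_inner : is_inner_product ip.
Implicit Types (a : R) (u v w : 'cV[R]_3).

Lemma ipC u v : ip u v = ip v u.
Proof. by case: ip_inner => _ []. Qed.

Lemma ip_self_gt0 v (i : 'I_3) : v i 0 != 0 -> 0 < ip v v.
Proof.
case: ip_inner => _ [_ ip_pos] vi; apply: ip_pos.
by apply: contraNneq vi => ->; rewrite mxE.
Qed.

Lemma ip0l w : ip 0 w = 0.
Proof.
case: ip_inner => ipl _; have := ipl 1 0 0 w.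
rewrite scaler0 addr0 mul1r => ip0_twice.
by apply: (addrI (ip 0 w)); rewrite addr0 -ip0_twice.
Qed.

Lemma ipZl a u w : ip (a *: u) w = a * ip u w.
Proof. by case: ip_inner => ipl _; rewrite -[a *: u]addr0 ipl ip0l addr0. Qed.

Lemma ipDl u v w : ip (u + v) w = ip u w + ip v w.
Proof. by case: ip_inner => ipl _; rewrite -{1}[u]scale1r ipl mul1r. Qed.

Lemma ipBl u v w : ip (u - v) w = ip u w - ip v w.
Proof. by rewrite ipDl -scaleN1r ipZl mulN1r. Qed.

Lemma ipZr a u w : ip w (a *: u) = a * ip w u.
Proof. by rewrite ipC ipZl ipC. Qed.

End InnerProduct.

Section Coordinates.
Variables (R : realType) (ip : 'cV[R]_3 -> 'cV[R]_3 -> R).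
Variables (k : R) (x : 'I_3 -> 'cV[R]_3).
Hypothesis ip_inner : is_inner_product ip.
Hypothesis x_orthonormal : forall i j : 'I_3, k * ip (x i) (x j) = (i == j)%:R.
Hypothesis x_span :
  forall v : 'cV[R]_3, exists d0 d1 d2 : R, v = d0 *: x 0 + d1 *: x 1 + d2 *: x 2.
Implicit Types (a : R) (u v : 'cV[R]_3).

Definition coord (j : 'I_3) (v : 'cV[R]_3) : R := k * ip v (x j).

Lemma coordD j u v : coord j (u + v) = coord j u + coord j v.
Proof. by rewrite /coord ipDl // mulrDr. Qed.

Lemma coordZ j a v : coord j (a *: v) = a * coord j v.
Proof. by rewrite /coord ipZl // mulrCA. Qed.

Lemma coordN j v : coord j (- v) = - coord j v.
Proof. by rewrite -scaleN1r coordZ mulN1r. Qed.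

Lemma coord0 j : coord j 0 = 0.
Proof. by rewrite /coord ip0l // mulr0. Qed.

Lemma coord_basis i j : coord j (x i) = (i == j)%:R.
Proof. exact: x_orthonormal. Qed.

Lemma coord_sum i (a : 'I_3 -> R) : coord i (\sum_(l < 3) a l *: x l) = a i.
Proof.
rewrite (big_morph (coord i) (coordD i) (coord0 i)) (bigD1 i) //=.
rewrite coordZ coord_basis eqxx mulr1 big1 ?addr0 // => l /negbTE il.
by rewrite coordZ coord_basis il mulr0.
Qed.

Lemma coord_expansion v :
  v = coord 0 v *: x 0 + coord 1 v *: x 1 + coord 2 v *: x 2.
Proof.
have [d0 [d1 [d2 ->]]] := x_span v.
by congr (_ *: _ + _ *: _ + _ *: _);
  rewrite !(coordD, coordZ, coord_basis) /=; ring.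
Qed.

Lemma coord_inj u v :
  coord 0 u = coord 0 v -> coord 1 u = coord 1 v -> coord 2 u = coord 2 v -> u = v.
Proof.
by move=> e0 e1 e2; rewrite (coord_expansion u) (coord_expansion v) e0 e1 e2.
Qed.

Variable lambda : R.
Hypothesis lambda_neq0 : lambda != 0.
Hypothesis x_bracket01 : r3_bracket (x 0) (x 1) = x 1 + lambda *: x 2.
Hypothesis x_bracket02 : r3_bracket (x 0) (x 2) = x 2.
Hypothesis x_bracket12 : r3_bracket (x 1) (x 2) = 0.

Lemma coord_bracket u v :
  [/\ coord 0 (r3_bracket u v) = 0,
      coord 1 (r3_bracket u v) = coord 0 u * coord 1 v - coord 1 u * coord 0 v &
      coord 2 (r3_bracket u v) =
        lambda * (coord 0 u * coord 1 v - coord 1 u * coord 0 v)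
        + (coord 0 u * coord 2 v - coord 2 u * coord 0 v)].
Proof.
have [u0 [u1 [u2 ->]]] := x_span u; have [v0 [v1 [v2 ->]]] := x_span v.
rewrite !(r3_bracketDl, r3_bracketDr, r3_bracketZl, r3_bracketZr, r3_bracket_self).
rewrite (r3_bracket_anti (x 1)) (r3_bracket_anti (x 2) (x 0)).
rewrite (r3_bracket_anti (x 2) (x 1)) x_bracket01 x_bracket02 x_bracket12.
by rewrite !(coordD, coordZ, coordN, coord0, coord_basis) /=; split; ring.
Qed.

Lemma coord0_bracket u v : coord 0 (r3_bracket u v) = 0.
Proof. by case: (coord_bracket u v). Qed.

Lemma coord1_bracket u v :
  coord 1 (r3_bracket u v) = coord 0 u * coord 1 v - coord 1 u * coord 0 v.
Proof. by case: (coord_bracket u v). Qed.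

Lemma coord2_bracket u v :
  coord 2 (r3_bracket u v) = lambda * (coord 0 u * coord 1 v - coord 1 u * coord 0 v)
                             + (coord 0 u * coord 2 v - coord 2 u * coord 0 v).
Proof. by case: (coord_bracket u v). Qed.

Lemma derivation_der_form (D : 'cV[R]_3 -> 'cV[R]_3) (M : 'M[R]_3) :
  is_derivation D -> matrix_wrt x D M ->
  exists x21 x22 x31 x32 : R, M = der_form x21 x22 x31 x32.
Proof.
move=> [D_linear D_leibniz] DM.
have coordDx i j : coord i (D (x j)) = M i j by rewrite DM coord_sum.
have D0 : D 0 = 0.
  have := D_linear 1 0 0; rewrite scaler0 addr0 scale1r => D0_twice.
  by apply: (addrI (D 0)); rewrite addr0 -D0_twice.
have L01 := D_leibniz (x 0) (x 1); rewrite x_bracket01 addrC D_linear in L01.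
have L02 := D_leibniz (x 0) (x 2); rewrite x_bracket02 in L02.
have L12 := D_leibniz (x 1) (x 2); rewrite x_bracket12 D0 in L12.
move: (congr1 (coord 0) L01) (congr1 (coord 1) L01) (congr1 (coord 2) L01).
move: (congr1 (coord 0) L02) (congr1 (coord 2) L02) (congr1 (coord 2) L12).
rewrite !(coordD, coordZ, coord0, coord0_bracket, coord1_bracket, coord2_bracket).
rewrite !(coordDx, coord_basis) /=.
rewrite !(mulr0, mulr1, mul1r, mul0r, subr0, sub0r, addr0, add0r).
move=> e02_0 e02_2 e12_2 e01_0 e01_1 e01_2.
have M00 : M 0 0 = 0 by lra.
have M01 : M 0 1 = 0 by lra.
have M12 : M 1 2 = 0.
  have : lambda * M 1 2 = 0 by lra.
  by move/eqP; rewrite mulf_eq0 (negbTE lambda_neq0) => /eqP.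
have M22 : M 2 2 = M 1 1.
  by apply: (mulfI lambda_neq0); move: e01_2; rewrite M00 mulr0; lra.
exists (M 1 0), (M 1 1), (M 2 0), (M 2 1).
apply/matrixP => i j; rewrite !mxE.
by case: (ord3P i) => [|[|]] ->; case: (ord3P j) => [|[|]] ->.
Qed.

Lemma der_form_derivation (a b c d : R) :
  exists D : 'cV[R]_3 -> 'cV[R]_3,
    is_derivation D /\ matrix_wrt x D (der_form a b c d).
Proof.
pose D v := (a * coord 0 v + b * coord 1 v) *: x 1
            + (c * coord 0 v + d * coord 1 v + b * coord 2 v) *: x 2.
have coord_D v : [/\ coord 0 (D v) = 0,
    coord 1 (D v) = a * coord 0 v + b * coord 1 v &
    coord 2 (D v) = c * coord 0 v + d * coord 1 v + b * coord 2 v].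
  by rewrite /D !(coordD, coordZ, coord_basis) /=; split; ring.
exists D; split; [split|].
- move=> s u v; rewrite /D !(coordD, coordZ).
  by apply/matrixP => i j; rewrite !mxE; ring.
- move=> u v; have [Du0 Du1 Du2] := coord_D u; have [Dv0 Dv1 Dv2] := coord_D v.
  have [DB0 DB1 DB2] := coord_D (r3_bracket u v).
  apply: coord_inj; rewrite coordD.
  + by rewrite DB0 !coord0_bracket addr0.
  + rewrite DB1 !coord0_bracket !coord1_bracket Du0 Du1 Dv0 Dv1; ring.
  + rewrite DB2 coord0_bracket coord1_bracket !coord2_bracket.
    by rewrite Du0 Du1 Du2 Dv0 Dv1 Dv2; ring.
- move=> j; have [Dx0 Dx1 Dx2] := coord_D (x j).
  apply: coord_inj; rewrite coord_sum ?Dx0 ?Dx1 ?Dx2 !mxE ?coord_basis;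
  by case: (ord3P j) => [|[|]] -> /=; ring.
Qed.

End Coordinates.

Section GramSchmidt.
Variables (R : realType) (ip : 'cV[R]_3 -> 'cV[R]_3 -> R).
Hypothesis ip_inner : is_inner_product ip.
Local Notation e i := (delta_mx i 0 : 'cV[R]_3).

Definition gs2 : 'cV[R]_3 := e 2.
Definition gs1 : 'cV[R]_3 := e 1 - (ip (e 1) gs2 / ip gs2 gs2) *: gs2.
Definition gs0 : 'cV[R]_3 :=
  e 0 - (ip (e 0) gs1 / ip gs1 gs1) *: gs1 - (ip (e 0) gs2 / ip gs2 gs2) *: gs2.

Definition gs_sqnorm : R := ip gs0 gs0.
Definition stretch1 : R := Num.sqrt (gs_sqnorm / ip gs1 gs1).
Definition stretch2 : R := Num.sqrt (gs_sqnorm / ip gs2 gs2).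

Definition r3_basis (i : 'I_3) : 'cV[R]_3 :=
  if i == 0 then gs0 else if i == 1 then stretch1 *: gs1 else stretch2 *: gs2.

Lemma gs0_entry : gs0 0 0 = 1.
Proof. by rewrite !mxE /=; ring. Qed.

Lemma gs1_entry : gs1 1 0 = 1.
Proof. by rewrite !mxE /=; ring. Qed.

Lemma gs2_entry : gs2 2 0 = 1.
Proof. by rewrite !mxE. Qed.

Lemma gs_sqnorm_gt0 :
  [/\ 0 < ip gs0 gs0, 0 < ip gs1 gs1 & 0 < ip gs2 gs2].
Proof.
split.
- by apply: (ip_self_gt0 ip_inner (i := 0)); rewrite gs0_entry oner_neq0.
- by apply: (ip_self_gt0 ip_inner (i := 1)); rewrite gs1_entry oner_neq0.
- by apply: (ip_self_gt0 ip_inner (i := 2)); rewrite gs2_entry oner_neq0.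
Qed.

Lemma gs_orthogonal :
  [/\ ip gs1 gs2 = 0, ip gs0 gs1 = 0 & ip gs0 gs2 = 0].
Proof.
have [_ /lt0r_neq0 gs1_neq0 /lt0r_neq0 gs2_neq0] := gs_sqnorm_gt0.
have gs12 : ip gs1 gs2 = 0 by rewrite /gs1 ipBl // ipZl //; field.
(* [set] keeps [ipBl] from unfolding [gs1] and [gs2] inside the norms. *)
split=> //; rewrite /gs0; set n1 := ip gs1 gs1; set n2 := ip gs2 gs2;
  rewrite !ipBl // !ipZl // {}/n1 {}/n2 ?(ipC _ gs2 gs1) // ?gs12;
  by field; apply/andP.
Qed.

Lemma stretch_gt0 : 0 < stretch1 /\ 0 < stretch2.
Proof.
have [gs0_pos gs1_pos gs2_pos] := gs_sqnorm_gt0.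
by rewrite !sqrtr_gt0 !divr_gt0.
Qed.

Lemma stretch_sqr :
  stretch1 ^+ 2 * ip gs1 gs1 = gs_sqnorm /\ stretch2 ^+ 2 * ip gs2 gs2 = gs_sqnorm.
Proof.
have [gs0_pos gs1_pos gs2_pos] := gs_sqnorm_gt0.
rewrite !sqr_sqrtr ?divr_ge0 ?ltW //.
by rewrite !divfK ?lt0r_neq0.
Qed.

Lemma r3_basis_orthonormal (i j : 'I_3) :
  gs_sqnorm^-1 * ip (r3_basis i) (r3_basis j) = (i == j)%:R.
Proof.
have [gs12 gs01 gs02] := gs_orthogonal.
have [gs0_pos _ _] := gs_sqnorm_gt0.
have [sqr1 sqr2] := stretch_sqr.
case: (ord3P i) => [|[|]] ->; case: (ord3P j) => [|[|]] -> /=;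
  rewrite /r3_basis /= ?ipZl ?ipZr // ?(ipC _ gs1 gs0) ?(ipC _ gs2 gs0)
    ?(ipC _ gs2 gs1) // ?gs12 ?gs01 ?gs02 ?mulr0 //.
- by rewrite mulVf ?lt0r_neq0.
- by rewrite mulrA -expr2 sqr1 mulVf ?lt0r_neq0.
- by rewrite mulrA -expr2 sqr2 mulVf ?lt0r_neq0.
Qed.

Lemma r3_basis_entries :
  [/\ r3_basis 0 0 0 = 1, r3_basis 1 0 0 = 0 /\ r3_basis 1 1 0 = stretch1 &
      [/\ r3_basis 2 0 0 = 0, r3_basis 2 1 0 = 0 & r3_basis 2 2 0 = stretch2]].
Proof.
by rewrite /r3_basis /= !mxE /=; split; [|split|split]; ring.
Qed.

Lemma r3_basis_bracket :
  [/\ r3_bracket (r3_basis 0) (r3_basis 1)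
        = r3_basis 1 + (stretch1 / stretch2) *: r3_basis 2,
      r3_bracket (r3_basis 0) (r3_basis 2) = r3_basis 2 &
      r3_bracket (r3_basis 1) (r3_basis 2) = 0].
Proof.
have [b00 [b10 b11] [b20 b21 b22]] := r3_basis_entries.
have [_ /lt0r_neq0 stretch2_neq0] := stretch_gt0.
by have := triangular_bracket b00 b10 b20 b21; rewrite b11 b22; apply.
Qed.

Lemma r3_basis_span (v : 'cV[R]_3) :
  exists d0 d1 d2 : R, v = d0 *: r3_basis 0 + d1 *: r3_basis 1 + d2 *: r3_basis 2.
Proof.
have [b00 [b10 b11] [b20 b21 b22]] := r3_basis_entries.
have [/lt0r_neq0 stretch1_neq0 /lt0r_neq0 stretch2_neq0] := stretch_gt0.
by apply: triangular_span; rewrite ?b11 ?b22.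
Qed.

End GramSchmidt.

Theorem proposition4p6 (R : realType) (ip : 'cV[R]_3 -> 'cV[R]_3 -> R) :
  is_inner_product ip ->
  exists (lambda k : R) (x : 'I_3 -> 'cV[R]_3),
    0 < lambda /\ 0 < k /\
    (* {x_1,x_2,x_3} is orthonormal for k <.,.> *)
    (forall i j : 'I_3, k * ip (x i) (x j) = (i == j)%:R) /\
    (* bracket relations *)
    r3_bracket (x 0) (x 1) = x 1 + lambda *: x 2 /\
    r3_bracket (x 0) (x 2) = x 2 /\
    r3_bracket (x 1) (x 2) = 0 /\
    (* the matrix expression of Der(g) w.r.t. {x_1,x_2,x_3} *)
    (forall M : 'M[R]_3,
       (exists D : 'cV[R]_3 -> 'cV[R]_3, is_derivation D /\ matrix_wrt x D M) <->
       (exists x21 x22 x31 x32 : R, M = der_form x21 x22 x31 x32)).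
Proof.
move=> ip_inner.
have [stretch1_pos stretch2_pos] := stretch_gt0 ip_inner.
have [gs0_pos _ _] := gs_sqnorm_gt0 ip_inner.
have lambda_pos : 0 < stretch1 ip / stretch2 ip by rewrite divr_gt0.
have onb := r3_basis_orthonormal ip_inner.
have span := r3_basis_span ip_inner.
have [br01 br02 br12] := r3_basis_bracket ip_inner.
exists (stretch1 ip / stretch2 ip), (gs_sqnorm ip)^-1, (r3_basis ip).
split=> //; split; first by rewrite invr_gt0.
do 4 (split=> //).
move=> M; split.
- move=> [D [D_der DM]].
  exact: (derivation_der_form ip_inner onb span (lt0r_neq0 lambda_pos)
            br01 br02 br12 D_der DM).
- move=> [a [b [c [d ->]]]].
  exact: (der_form_derivation ip_inner onb span br01 br02 br12).
Qed.
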